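(* Let $\mathbf k=(k_1,\ldots,k_r)\in\mathbb N^r$, $\mathbf x=(x_1,\ldots,x_r)$ with $|x_j|\le1$, $l\in\mathbb N_0$ and $n\in\mathbb N$. Then \[ \sum_{n\ge n_1>\cdots>n_r>0}\prod_{j=1}^r\frac{x_j^{n_j+l}}{(n_j+l)^{k_j}}=(-1)^r\sum_{j=0}^r(-1)^j\,\zeta_{n+l}(k_1,\ldots,k_j;x_1,\ldots,x_j)\,\zeta^\star_l(k_r,k_{r-1},\ldots,k_{j+1};x_r,x_{r-1},\ldots,x_{j+1}). \]
   Context: $\zeta_n(\mathbf k;\mathbf x)=\sum_{n\ge n_1>\cdots>n_r\ge1}\prod_i x_i^{n_i}/n_i^{k_i}$ and $\zeta^\star_n(\mathbf k;\mathbf x)=\sum_{n\ge n_1\ge\cdots\ge n_r\ge1}\prod_i x_i^{n_i}/n_i^{k_i}$ for $n\in\mathbb N_0$; both equal $1$ for the empty index, and a sum over an empty range is $0$ (so e.g. $\zeta^\star_0$ of a nonempty index is $0$). *)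

From HB Require Import structures.
From mathcomp Require Import all_boot all_order all_algebra.
Set Implicit Arguments. Unset Strict Implicit. Unset Printing Implicit Defensive.
Import Order.TTheory GRing.Theory Num.Theory.
Local Open Scope ring_scope.

(* Summation variables n_1,...,n_r are encoded as m : 'I_r -> 'I_(n+1). *)

Definition mzeta (R : numFieldType) (n : nat) (k : seq nat) (x : seq R) : R :=
  \sum_(m : {ffun 'I_(size k) -> 'I_n.+1} |
          [forall i, (0 < (m i : nat))%N] &&
          [forall i : 'I_(size k), forall j : 'I_(size k), ((i : nat) < j)%N ==> ((m j : nat) < m i)%N])
    \prod_(i < size k) ((nth 0 x i) ^+ (m i) / ((m i : nat)%:R ^+ nth 0%N k i)).

Definition mzetaStar (R : numFieldType) (n : nat) (k : seq nat) (x : seq R) : R :=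
  \sum_(m : {ffun 'I_(size k) -> 'I_n.+1} |
          [forall i, (0 < (m i : nat))%N] &&
          [forall i : 'I_(size k), forall j : 'I_(size k), ((i : nat) < j)%N ==> ((m j : nat) <= m i)%N])
    \prod_(i < size k) ((nth 0 x i) ^+ (m i) / ((m i : nat)%:R ^+ nth 0%N k i)).

From HB Require Import structures.
From mathcomp Require Import all_boot all_order all_algebra.
From mathcomp Require Import ring zify.
Import Order.TTheory GRing.Theory Num.Theory.
Local Open Scope ring_scope.

(* The identity is purely combinatorial: it holds for arbitrary summands
   F i a (term of the i-th summation variable taking the value a).  We encode nested sums recursively:
     nestedSum predn lo N r F = sum_{N >= a_1 > ... > a_r > lo} prod F i a_i,
     nestedSum id    0  N r F = sum_{N >= a_1 >= ... >= a_r >= 1} prod F i a_i.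
   Peeling off the innermost strict variable a_r = p+1 and splitting p < l
   from p >= l gives, by induction on r, the alternating identity
     sum_j (-1)^j zeta_N(F_1..F_j) zeta*_l(F_r..F_{j+1}) = (-1)^r zeta_{N,>l}(F),
   whose right-hand side is the shifted sum of the theorem. *)

Section NestedSums.
Variable R : comNzRingType.
Implicit Types (F G : nat -> nat -> R) (f : nat -> nat).

(* The outermost variable is a+1 with lo <= a < N; the next variable is then
   bounded by f (a+1): by a for strict chains, by a+1 for weak ones. *)
Fixpoint nestedSum f (lo N r : nat) F : R :=
  if r is r'.+1 then
    \sum_(lo <= a < N) F 0%N a.+1 * nestedSum f lo (f a.+1) r' (fun i => F i.+1)
  else 1.

Lemma nestedSumS f lo N r F :
  nestedSum f lo N r.+1 F =
  \sum_(lo <= a < N) F 0%N a.+1 * nestedSum f lo (f a.+1) r (fun i => F i.+1).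
Proof. by []. Qed.

Lemma nestedSum_ext f lo N r F G :
  (forall i a, (i < r)%N -> F i a = G i a) ->
  nestedSum f lo N r F = nestedSum f lo N r G.
Proof.
elim: r lo N F G => //= r IH lo N F G eqFG.
apply: eq_bigr => a _; rewrite eqFG //; congr (_ * _).
by apply: IH => i b ltir; apply: eqFG.
Qed.

Lemma nestedSum_shift N s r F :
  nestedSum predn 0 N r (fun i a => F i (a + s)%N) = nestedSum predn s (N + s) r F.
Proof.
elim: r N F => //= r IH N F.
rewrite [RHS](big_addn 0 _ s) addnK; apply: eq_bigr => a _.
by rewrite (IH a (fun i => F i.+1)) addSn.
Qed.

Lemma exchange_triangle lo N (H : nat -> nat -> R) :
  \sum_(lo <= a < N) \sum_(lo <= p < a) H a p =
  \sum_(lo <= p < N) \sum_(p.+1 <= a < N) H a p.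
Proof.
elim: N => [|N IH]; first by rewrite !big_geq.
have [ltNlo | loN] := ltnP N lo; first by rewrite !big_geq.
rewrite [LHS]big_nat_recr //= IH [RHS]big_nat_recr //= [X in _ = _ + X]big_geq // addr0.
rewrite -big_split /=; apply: eq_big_nat => p /andP[_ ltpN].
by rewrite big_nat_recr.
Qed.

Lemma nestedSum_peel_last lo N r F :
  nestedSum predn lo N r.+1 F =
  \sum_(lo <= p < N) F r p.+1 * nestedSum predn p.+1 N r F.
Proof.
elim: r lo N F => [|r IH] lo N F; first by [].
rewrite [LHS]nestedSumS.
under eq_bigr => a _ do rewrite IH mulr_sumr /=.
rewrite (exchange_triangle lo N); apply: eq_bigr => p _.
by rewrite nestedSumS mulr_sumr; apply: eq_bigr => a _; rewrite mulrCA.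
Qed.

Lemma alternating_identity r F N l : (l <= N)%N ->
  \sum_(j < r.+1) (-1) ^+ j * nestedSum predn 0 N j F
                  * nestedSum id 0 l (r - j) (fun i => F (r - i.+1)%N)
  = (-1) ^+ r * nestedSum predn l N r F.
Proof.
elim: r l => [|r IH] l leN; first by rewrite big_ord1 /= expr0 !mul1r.
set X := \sum_(0 <= p < l) F r p.+1 * nestedSum predn p.+1 N r F.
have weak_peel (j : 'I_r.+1) :
    nestedSum id 0 l (r.+1 - j) (fun i => F (r.+1 - i.+1)%N) =
    \sum_(0 <= p < l) F r p.+1 * nestedSum id 0 p.+1 (r - j) (fun i => F (r - i.+1)%N).
  rewrite subSn; last by rewrite -ltnS.
  rewrite nestedSumS; apply: eq_bigr => p _.
  by rewrite subSS subn0.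
have lower_terms :
    \sum_(j < r.+1) (-1) ^+ j * nestedSum predn 0 N j F *
      nestedSum id 0 l (r.+1 - j) (fun i => F (r.+1 - i.+1)%N) = (-1) ^+ r * X.
  under eq_bigr => j _ do rewrite weak_peel mulr_sumr.
  rewrite exchange_big /= /X mulr_sumr; apply: eq_big_nat => p /andP[_ ltpl].
  rewrite mulrCA -(IH p.+1 (leq_trans ltpl leN)) mulr_sumr.
  by apply: eq_bigr => j _; rewrite mulrCA.
have split_strict : nestedSum predn 0 N r.+1 F = X + nestedSum predn l N r.+1 F.
  by rewrite !nestedSum_peel_last /X -big_cat_nat.
rewrite big_ord_recr lower_terms; change (nat_of_ord (@ord_max r.+1)) with r.+1.
rewrite subnn split_strict exprS mulr1.
(* Z is kept opaque so that simplification only normalizes the additions. *)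
set Z := nestedSum predn l N r.+1 F; rewrite /=; ring.
Qed.

End NestedSums.

Arguments nestedSum {R} f lo N r F.

Definition fcons {T : Type} {r : nat} (a : T) (g : {ffun 'I_r -> T}) : {ffun 'I_r.+1 -> T} :=
  [ffun i => if unlift ord0 i is Some j then g j else a].

Lemma fcons0 {T : Type} {r : nat} (a : T) (g : {ffun 'I_r -> T}) : fcons a g ord0 = a.
Proof. by rewrite ffunE unlift_none. Qed.

Lemma fconsS {T : Type} {r : nat} (a : T) (g : {ffun 'I_r -> T}) (j : 'I_r) :
  fcons a g (lift ord0 j) = g j.
Proof. by rewrite ffunE liftK. Qed.

Lemma sum_ffun_cons (R : nmodType) (T : finType) (r : nat)
    (G : {ffun 'I_r.+1 -> T} -> R) :
  \sum_(m : {ffun 'I_r.+1 -> T}) G m =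
  \sum_(a : T) \sum_(g : {ffun 'I_r -> T}) G (fcons a g).
Proof.
rewrite pair_big /= (reindex (fun p : T * {ffun 'I_r -> T} => fcons p.1 p.2)) //=.
exists (fun m => (m ord0, [ffun j => m (lift ord0 j)])) => [[a g] _ | m _] /=.
- by rewrite fcons0; congr pair; apply/ffunP => j; rewrite ffunE fconsS.
- by apply/ffunP => i; rewrite ffunE; case: unliftP => [j ->|->]; rewrite ?ffunE.
Qed.

Lemma sum_ord_window {R : nmodType} N b (G : nat -> R) : (b <= N)%N ->
  \sum_(a < N.+1) (if (0 < a <= b)%N then G a else 0) = \sum_(0 <= a < b) G a.+1.
Proof.
move=> lebN; rewrite -(big_mkord xpredT (fun a => if (0 < a <= b)%N then G a else 0)).
by rewrite big_nat_recl //= add0r (big_nat_widen 0 b N) // [RHS]big_mkcond.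
Qed.

Section Chains.
(* e is the comparison between consecutive variables (strict or weak); for a
   positive value v, the values allowed below v are exactly those <= f v. *)
Variables (e : rel nat) (f : nat -> nat).
Hypothesis e_bound : forall u v, (0 < v)%N -> e u v = (u <= f v)%N.
Hypothesis f_le : forall v, (f v <= v)%N.

Definition chain {r N : nat} (b : nat) (m : {ffun 'I_r -> 'I_N.+1}) : bool :=
  [forall i, (0 < m i)%N] &&
  [forall i : 'I_r, forall j : 'I_r, (i < j)%N ==> e (m j) (m i)] &&
  [forall i, (m i <= b)%N].

Lemma chain_cons r N b (a : 'I_N.+1) (g : {ffun 'I_r -> 'I_N.+1}) :
  chain b (fcons a g) = (0 < a <= b)%N && chain (f a) g.
Proof.
apply/idP/idP.
- case/andP => /andP[/forallP pos /forallP dec] /forallP bnd.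
  have a_gt0 := pos ord0; rewrite fcons0 in a_gt0.
  have a_le := bnd ord0; rewrite fcons0 in a_le.
  rewrite a_gt0 a_le /=; apply/andP; split; first (apply/andP; split).
  + by apply/forallP => j; have := pos (lift ord0 j); rewrite fconsS.
  + apply/forallP => i; apply/forallP => j; apply/implyP => ltij.
    by have /forallP/(_ (lift ord0 j)) := dec (lift ord0 i); rewrite !fconsS !lift0 ltnS ltij.
  + apply/forallP => j; have /forallP/(_ (lift ord0 j)) := dec ord0.
    by rewrite fconsS fcons0 lift0 e_bound.
- case/andP => /andP[a_gt0 a_le] /andP[/andP[/forallP pos /forallP dec] /forallP bnd].
  apply/andP; split; first (apply/andP; split).
  + by apply/forallP => i; case: (unliftP ord0 i) => [j ->|->]; rewrite ?fconsS ?fcons0.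
  + apply/forallP => i; apply/forallP => j; apply/implyP.
    case: (unliftP ord0 i) => [i' ->|->]; case: (unliftP ord0 j) => [j' ->|->];
      rewrite ?fconsS ?fcons0 ?lift0 //=.
    * by rewrite ltnS => ltij; have /forallP/(_ j')/implyP := dec i'; apply.
    * by move=> _; rewrite e_bound.
  + apply/forallP => i; case: (unliftP ord0 i) => [j ->|->]; rewrite ?fconsS ?fcons0 //.
    exact: leq_trans (bnd j) (leq_trans (f_le a) a_le).
Qed.

Lemma sum_chain {R : comNzRingType} N r b (F : nat -> nat -> R) : (b <= N)%N ->
  \sum_(m : {ffun 'I_r -> 'I_N.+1} | chain b m) \prod_(i < r) F i (m i)
  = nestedSum f 0 b r F.
Proof.
elim: r b F => [|r IH] b F lebN.
  rewrite (big_pred1 [ffun=> ord0]) ?big_ord0 // => m /=.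
  have -> : m = [ffun=> ord0] by apply/ffunP => -[].
  by rewrite eqxx; apply/andP; split; [apply/andP; split|]; apply/forallP => -[].
pose G a := F 0%N a * nestedSum f 0 (f a) r (fun i => F i.+1).
rewrite nestedSumS -(sum_ord_window N b G lebN) big_mkcond sum_ffun_cons.
apply: eq_bigr => a _; case: ifPn => [a_range | a_out]; last first.
  by rewrite big1 // => g _; rewrite chain_cons (negbTE a_out).
rewrite /G -IH; last exact: leq_trans (f_le a) (leq_ord a).
rewrite mulr_sumr [RHS]big_mkcond.
apply: eq_bigr => g _; rewrite chain_cons a_range /=; case: ifP => // _.
by rewrite big_ord_recl fcons0; congr (_ * _); apply: eq_bigr => i _; rewrite fconsS.
Qed.

Lemma sum_chain_unbounded {R : comNzRingType} N r (F : nat -> nat -> R) :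
  \sum_(m : {ffun 'I_r -> 'I_N.+1} | [forall i, (0 < m i)%N] &&
          [forall i : 'I_r, forall j : 'I_r, (i < j)%N ==> e (m j) (m i)])
    \prod_(i < r) F i (m i)
  = nestedSum f 0 N r F.
Proof.
rewrite -(sum_chain N r N F (leqnn N)); apply: eq_bigl => m.
by rewrite /chain (_ : [forall i, (m i <= N)%N] = true) ?andbT //; apply/forallP => i; apply: leq_ord.
Qed.
End Chains.

Lemma ltn_bound u v : (0 < v)%N -> (u < v)%N = (u <= v.-1)%N.
Proof. by move=> v_gt0; rewrite -{1}(prednK v_gt0) ltnS. Qed.

Definition polylogTerm {R : numFieldType} (k : seq nat) (x : seq R) (i a : nat) : R :=
  nth 0 x i ^+ a / a%:R ^+ nth 0%N k i.

Lemma mzeta_nested (R : numFieldType) N k (x : seq R) :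
  mzeta N k x = nestedSum predn 0 N (size k) (polylogTerm k x).
Proof. exact: (@sum_chain_unbounded (fun u v => u < v)%N predn ltn_bound leq_pred). Qed.

Lemma mzetaStar_nested (R : numFieldType) N k (x : seq R) :
  mzetaStar N k x = nestedSum id 0 N (size k) (polylogTerm k x).
Proof. exact: (@sum_chain_unbounded leq id (fun _ _ _ => erefl) leqnn). Qed.

Lemma mzeta_take (R : numFieldType) N j k (x : seq R) : (j <= size k)%N ->
  mzeta N (take j k) (take j x) = nestedSum predn 0 N j (polylogTerm k x).
Proof.
move=> lejk; rewrite mzeta_nested size_takel //.
by apply: nestedSum_ext => i a ltij; rewrite /polylogTerm !nth_take.
Qed.

Lemma mzetaStar_rev_drop (R : numFieldType) N j k (x : seq R) :
  size x = size k -> (j <= size k)%N ->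
  mzetaStar N (rev (drop j k)) (rev (drop j x)) =
  nestedSum id 0 N (size k - j) (fun i => polylogTerm k x (size k - i.+1)).
Proof.
move=> sizex lejk; rewrite mzetaStar_nested size_rev size_drop.
apply: nestedSum_ext => i a ltij.
rewrite /polylogTerm !nth_rev ?size_drop ?sizex // !nth_drop.
by rewrite (_ : j + (size k - j - i.+1) = size k - i.+1)%N //; lia.
Qed.

Theorem mainTheorem12 (R : numFieldType) (k : seq nat) (x : seq R) (l n : nat)
    (hsize : size x = size k)
    (hk : all (fun a => (0 < a)%N) k)
    (hx : all (fun y => `|y| <= 1) x)
    (hn : (0 < n)%N) :
  \sum_(m : {ffun 'I_(size k) -> 'I_n.+1} |
          [forall i, (0 < (m i : nat))%N] &&
          [forall i : 'I_(size k), forall j : 'I_(size k), ((i : nat) < j)%N ==> ((m j : nat) < m i)%N])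
    \prod_(i < size k)
       ((nth 0 x i) ^+ (m i + l) / (((m i : nat) + l)%:R ^+ nth 0%N k i))
  = (-1) ^+ size k *
    \sum_(j < (size k).+1)
      (-1) ^+ j * mzeta (n + l) (take j k) (take j x)
                * mzetaStar l (rev (drop j k)) (rev (drop j x)).
Proof.
pose G := polylogTerm k x.
(* The left side is the strict sum with all variables in (l, n + l]. *)
have shifted_lhs := @sum_chain_unbounded (fun u v => u < v)%N predn ltn_bound leq_pred
  R n (size k) (fun i a => G i (a + l)%N).
rewrite nestedSum_shift {1}/G /polylogTerm in shifted_lhs.
rewrite {}shifted_lhs.
have prefix (j : 'I_(size k).+1) :
    mzeta (n + l) (take j k) (take j x) = nestedSum predn 0 (n + l) j G.
  exact: mzeta_take (leq_ord j).
have suffix (j : 'I_(size k).+1) :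
    mzetaStar l (rev (drop j k)) (rev (drop j x)) =
    nestedSum id 0 l (size k - j) (fun i => G (size k - i.+1)%N).
  exact: mzetaStar_rev_drop hsize (leq_ord j).
under eq_bigr => j _ do rewrite prefix suffix.
rewrite alternating_identity; last exact: leq_addl.
by rewrite signrMK.
Qed.
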